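(* Let $n\ge 1$, $k\ge 2$, $\mathcal{K}$ a set of size $k$, $\epsilon\ge 0$ and $p=e^\epsilon/(k-1+e^\epsilon)$. Then, as matrices indexed by $\mathcal{K}^n\times\mathcal{Z}$, $\mathbf{N}\mathbf{S}^r=\mathbf{S}^r\mathbf{N}^r$.
   Context: A dataset is $x\in\mathcal{K}^n$; its histogram $h(x)$ is the map $\kappa\mapsto|\{i:x_i=\kappa\}|$; $\mathcal{Z}$ is the set of all histograms (maps $\mathcal{K}\to\mathbb{N}$ with values summing to $n$) and $\#z$ is the number of datasets with histogram $z$. The full $k$-RR channel $\mathbf{N}:\mathcal{K}^n\to\mathcal{K}^n$ has $\mathbf{N}_{x,y}=\prod_{i=0}^{n-1}q(y_i\mid x_i)$ with $q(b\mid a)=p$ if $b=a$ and $(1-p)/(k-1)$ otherwise. The reduced shuffle channel $\mathbf{S}^r:\mathcal{K}^n\to\mathcal{Z}$ has $\mathbf{S}^r_{x,z}=1$ if $h(x)=z$, else $0$. The reduced $k$-RR channel $\mathbf{N}^r:\mathcal{Z}\to\mathcal{Z}$ is $\mathbf{N}^r_{z',z}=\frac{1}{\#z'}\sum_{x'\in\mathcal{K}^n:\,h(x')=z'}\ \sum_{y\in\mathcal{K}^n:\,h(y)=z}\mathbf{N}_{x',y}$. Products are ordinary matrix products. *)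

From HB Require Import structures.
From mathcomp Require Import all_boot all_order all_algebra.
From mathcomp Require Import reals sequences exp.
Set Implicit Arguments. Unset Strict Implicit. Unset Printing Implicit Defensive.
Import Order.TTheory GRing.Theory Num.Theory.
Local Open Scope ring_scope.

Definition dataset (K : finType) (n : nat) := {ffun 'I_n -> K}.

Definition cnt (K : finType) n (x : dataset K n) (a : K) : nat :=
  #|[pred i : 'I_n | x i == a]|.

Lemma cnt_le (K : finType) n (x : dataset K n) a : (cnt x a < n.+1)%N.
Proof. rewrite ltnS /cnt; apply: leq_trans (max_card _) _; by rewrite card_ord. Qed.

Lemma sum_cnt (K : finType) n (x : dataset K n) : (\sum_(a : K) cnt x a)%N = n.
Proof.
rewrite /cnt.
transitivity (\sum_(a : K) \sum_(i < n) (x i == a : nat))%N.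
  by apply: eq_bigr => a _; rewrite -sum1_card big_mkcond.
rewrite exchange_big /= -[RHS]card_ord -sum1_card.
apply: eq_bigr => i _.
rewrite (bigD1 (x i)) //= eqxx big1 ?addn0 // => a /negPf ne.
by rewrite eq_sym ne.
Qed.

(* Histograms: maps K -> N with values summing to n (values are automatically
   <= n, so they are stored in 'I_n.+1 to obtain a finite type). *)
Definition histogram (K : finType) (n : nat) :=
  {h : {ffun K -> 'I_n.+1} | (\sum_(a : K) (h a : nat))%N == n}.

Lemma hist_ok (K : finType) n (x : dataset K n) :
  (\sum_(a : K) (([ffun a => Ordinal (cnt_le x a)] : {ffun K -> 'I_n.+1}) a : nat))%N == n.
Proof.
by apply/eqP; rewrite -[RHS](sum_cnt x); apply: eq_bigr => a _; rewrite ffunE.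
Qed.

Definition hist (K : finType) n (x : dataset K n) : histogram K n :=
  exist _ [ffun a => Ordinal (cnt_le x a)] (hist_ok x).

Definition nhist (K : finType) n (z : histogram K n) : nat :=
  #|[pred x : dataset K n | hist x == z]|.

Definition fmat (R : pzRingType) (A B : finType) := A -> B -> R.
Definition fmul (R : pzRingType) (A B C : finType)
  (M : fmat R A B) (N : fmat R B C) : fmat R A C :=
  fun a c => \sum_(b : B) M a b * N b c.

Definition qRR (R : fieldType) (K : finType) (k : nat) (p : R) (b a : K) : R :=
  if b == a then p else (1 - p) / (k%:R - 1).

Definition fullRR (R : fieldType) (K : finType) (k n : nat) (p : R)
  : fmat R (dataset K n) (dataset K n) :=
  fun x y => \prod_(i < n) qRR k p (y i) (x i).

Definition shuffleR (R : pzRingType) (K : finType) (n : nat)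
  : fmat R (dataset K n) (histogram K n) :=
  fun x z => if hist x == z then 1 else 0.

Definition reducedRR (R : fieldType) (K : finType) (k n : nat) (p : R)
  : fmat R (histogram K n) (histogram K n) :=
  fun z' z => (nhist z')%:R^-1 *
    \sum_(x' : dataset K n | hist x' == z')
      \sum_(y : dataset K n | hist y == z) @fullRR R K k n p x' y.

From HB Require Import structures.
From mathcomp Require Import all_boot all_order all_algebra perm.
From mathcomp Require Import reals sequences exp.
Import Order.TTheory GRing.Theory Num.Theory.
Local Open Scope ring_scope.
Set Implicit Arguments.

(* Two datasets have the same histogram exactly when one is a permutation of
   the other, and the full k-RR channel commutes with permuting the positions
   of input and output simultaneously.  Hence the probability that the output
   of [N] on [x'] has histogram [z] is the same for every [x'] with
   [h x' = h x], so the average defining [N^r (h x) z] is an average of equal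
   terms; this is the [(x, z)] entry of [N S^r].  Nothing about [p] is used. *)

Lemma card_count (T : finType) (P : pred T) : #|P| = count P (enum T).
Proof.
rewrite cardE /enum_mem size_filter count_filter -enumT.
by apply: eq_count => t; rewrite /= andbT.
Qed.

Section Histograms.
Variables (K : finType) (n : nat).
Implicit Types (x y : dataset K n) (s : {perm 'I_n}).

Lemma cnt_count x a : cnt x a = count_mem a [tuple x i | i < n].
Proof. by rewrite /cnt card_count /= count_map. Qed.

Lemma histP x y : hist x = hist y <-> cnt x =1 cnt y.
Proof.
split=> [/(congr1 val) /ffunP eq_xy a | eq_xy].
  by have := congr1 val (eq_xy a); rewrite !ffunE.
by apply/val_inj/ffunP => a; apply: val_inj; rewrite /= !ffunE /= eq_xy.
Qed.

Definition permute s x : dataset K n := [ffun i => x (s i)].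

Lemma permute_inj s : injective (permute s).
Proof.
move=> x y /ffunP eq_sxy; apply/ffunP => i.
by have := eq_sxy ((s^-1)%g i); rewrite !ffunE permKV.
Qed.

Lemma hist_permute s x : hist (permute s x) = hist x.
Proof.
apply/histP => a; rewrite /cnt -!sum1_card [RHS](reindex_inj (@perm_inj _ s)) /=.
by apply: eq_bigl => i; rewrite !inE ffunE.
Qed.

Lemma hist_eq_permute x y : hist x = hist y -> exists s, x = permute s y.
Proof.
move/histP => eq_cnt.
have : perm_eq [tuple x i | i < n] [tuple y i | i < n].
  by apply/allP => a _ /=; rewrite -!cnt_count eq_cnt.
case/tuple_permP => s /val_inj eq_xy; exists s; apply/ffunP => i.
by have := congr1 (fun t => tnth t i) eq_xy; rewrite /= !tnth_mktuple ffunE.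
Qed.

Lemma nhist_hist_gt0 x : (0 < nhist (hist x))%N.
Proof. by apply/card_gt0P; exists x; rewrite inE. Qed.

End Histograms.

Section Shuffle.
Variables (R : pzRingType) (K : finType) (n : nat).

Lemma fmul_shuffleR (A : finType) (M : fmat R A (dataset K n)) a z :
  fmul M (@shuffleR R K n) a z = \sum_(y | hist y == z) M a y.
Proof.
rewrite /fmul /shuffleR [RHS]big_mkcond; apply: eq_bigr => y _.
by case: eqP; rewrite ?mulr1 ?mulr0.
Qed.

Lemma shuffleR_fmul (C : finType) (M : fmat R (histogram K n) C) x c :
  fmul (@shuffleR R K n) M x c = M (hist x) c.
Proof.
rewrite /fmul /shuffleR (bigD1 (hist x)) //= eqxx mul1r big1 ?addr0 // => z.
by rewrite eq_sym => /negPf ->; rewrite mul0r.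
Qed.

End Shuffle.

Lemma mean_sumr_const {R : numFieldType} {T : finType} {P : pred T} (c : R) :
  (0 < #|P|)%N -> #|P|%:R^-1 * \sum_(i | P i) c = c.
Proof.
move=> P_gt0; rewrite sumr_const -[c *+ _]mulr_natl mulrA mulVf ?mul1r //.
by rewrite pnatr_eq0 -lt0n.
Qed.

Section ReducedChannel.
Variables (K : finType) (k n : nat).

Lemma fullRR_permute (R : fieldType) (p : R) (s : {perm 'I_n}) (x y : dataset K n) :
  fullRR k p (permute s x) (permute s y) = fullRR k p x y.
Proof.
rewrite /fullRR (reindex_inj (@perm_inj _ s^-1)) /=.
by apply: eq_bigr => i _; rewrite !ffunE permKV.
Qed.

Lemma sum_fullRR_hist (R : fieldType) (p : R) (x x' : dataset K n) z :
  hist x' = hist x ->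
  \sum_(y | hist y == z) fullRR k p x' y = \sum_(y | hist y == z) fullRR k p x y.
Proof.
case/hist_eq_permute => s ->.
rewrite (reindex_inj (@permute_inj _ _ s)).
by apply: eq_big => [y | y _]; rewrite ?hist_permute ?fullRR_permute.
Qed.

Lemma reducedRR_hist (R : numFieldType) (p : R) (x : dataset K n) z :
  reducedRR k p (hist x) z = \sum_(y | hist y == z) fullRR k p x y.
Proof.
rewrite /reducedRR (eq_bigr _ (fun x' => @sum_fullRR_hist R p x x' z \o eqP)).
exact: mean_sumr_const _ (nhist_hist_gt0 x).
Qed.

End ReducedChannel.

Theorem mainTheorem4 (R : realType) (K : finType) (n k : nat) (eps : R) :
  (1 <= n)%N -> (2 <= k)%N -> #|K| = k -> 0 <= eps ->
  let p := expR eps / (k%:R - 1 + expR eps) in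
  forall (x : dataset K n) (z : histogram K n),
    fmul (@fullRR R K k n p) (@shuffleR R K n) x z
    = fmul (@shuffleR R K n) (@reducedRR R K k n p) x z.
Proof.
move=> _ _ _ _ p x z.
by rewrite fmul_shuffleR shuffleR_fmul reducedRR_hist.
Qed.
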